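(* Let $f:\mathbb{R}^n\to\mathbb{R}$ be convex and differentiable with $\nabla f$ $L$-Lipschitz continuous, and assume its minimizer set $X^*$ is non-empty. Let $\{x^k\},\{z^k\},\{h_k\}$ be generated by Algorithm 3 with $0\le\beta\le1$, and set $d^k:=h_k\big(\nabla f(x^k)-\beta(\nabla f(x^k)-\nabla f(z^k))\big)$. Then for every $x^*\in X^*$ and every $k$, $$\langle x^k-x^*,d^k\rangle\ge(1-\beta)\Big(1-\frac{Lh_k}{4}\Big)\|x^k-z^k\|^2+\beta\langle x^k-z^k,h_k\nabla f(z^k)\rangle\ge\kappa_3\|x^k-z^k\|^2,$$ where $\kappa_3=(1-\beta)\big(1-\frac{Lh_k}{4}\big)+\beta(1-\nu)>0$.
   Context: $X^*=\{x:\nabla f(x)=0\}$ (the set of minimizers of the convex $f$). Algorithm 3: parameters $0<\mu<\nu<1$, $0<\underline{h}<1\le\gamma_0^0\le\overline{h}<\frac4L$, $0\le\beta\le1$, $\theta\in(0,1)$, $\tau>1$, $\eta\in(0,2)$, starting point $x^0$; run while $\nabla f(x^k)\neq0$. At iteration $k$: for $\gamma>0$ let $z^k(\gamma)=x^k-\gamma\nabla f(x^k)$ and $r_k(\gamma)=\gamma\|\nabla f(z^k(\gamma))-\nabla f(x^k)\|/\|z^k(\gamma)-x^k\|$; starting from $\gamma_0^k$, while $r_k(\gamma_l^k)>\nu$ set $\gamma_{l+1}^k=\gamma_l^k\theta\min\{1,1/r_k(\gamma_l^k)\}$; let $h_k$ be the first $\gamma_l^k$ with $r_k(\gamma_l^k)\le\nu$.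 Then $z^k=x^k-h_k\nabla f(x^k)$ and $x^{k+1}=x^k-\eta\alpha_kh_k\big(\nabla f(x^k)-\beta(\nabla f(x^k)-\nabla f(z^k))\big)$ with $$\alpha_k=\frac{(1-\beta)\left(1-\frac{Lh_k}{4}\right)\|x^k-z^k\|^2+\beta\langle x^k-z^k,h_k\nabla f(z^k)\rangle}{h_k^2\|\nabla f(x^k)-\beta(\nabla f(x^k)-\nabla f(z^k))\|^2};$$ finally $\gamma_0^{k+1}=\mathbf{P}_{[\underline{h},\overline{h}]}(\tau h_k)$ if $r_k(h_k)\le\mu$, else $\gamma_0^{k+1}=\mathbf{P}_{[\underline{h},\overline{h}]}(h_k)$, where $\mathbf{P}_{[a,b]}$ is projection onto $[a,b]$. *)

From HB Require Import structures.
From mathcomp Require Import all_boot all_order all_algebra.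
From mathcomp Require Import all_classical all_reals all_analysis.
Set Implicit Arguments. Unset Strict Implicit. Unset Printing Implicit Defensive.
Import Order.TTheory GRing.Theory Num.Theory.
Import numFieldNormedType.Exports.
Local Open Scope ring_scope.

Section Defs.
Variables (R : realType) (n : nat).
Implicit Types (u v x : 'rV[R]_n).

Definition dot u v : R := \sum_(i < n) u ord0 i * v ord0 i.
Definition enorm u : R := Num.sqrt (dot u u).

Definition convex_fun (f : 'rV[R]_n -> R) :=
  forall x y (a : R), 0 <= a <= 1 ->
    f (a *: x + (1 - a) *: y) <= a * f x + (1 - a) * f y.

Definition is_gradient (f : 'rV[R]_n -> R) (g : 'rV[R]_n -> 'rV[R]_n) :=
  forall x, differentiable f x /\ forall v, 'D_v f x = dot (g x) v.

Definition lipschitz_grad (g : 'rV[R]_n -> 'rV[R]_n) (L : R) :=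
  forall x y, enorm (g x - g y) <= L * enorm (x - y).

Definition zk (g : 'rV[R]_n -> 'rV[R]_n) x (gam : R) := x - gam *: g x.
Definition rk (g : 'rV[R]_n -> 'rV[R]_n) x (gam : R) : R :=
  gam * enorm (g (zk g x gam) - g x) / enorm (zk g x gam - x).

Fixpoint gam_seq (g : 'rV[R]_n -> 'rV[R]_n) x (theta gam0 : R) (l : nat) : R :=
  match l with
  | O => gam0
  | S l' => let c := gam_seq g x theta gam0 l' in
            c * theta * Num.min 1 (1 / rk g x c)
  end.

Definition proj_int (a b t : R) : R := Num.max a (Num.min b t).

Definition alg3 (g : 'rV[R]_n -> 'rV[R]_n) (L mu nu hlo hhi beta theta tau eta : R)
  (x0 : 'rV[R]_n) (x z : nat -> 'rV[R]_n) (h gamma0 : nat -> R) : Prop :=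
  x 0%N = x0 /\
  forall k : nat, (forall j : nat, (j <= k)%N -> g (x j) != 0) ->
    [/\ exists l : nat,
          [/\ rk g (x k) (gam_seq g (x k) theta (gamma0 k) l) <= nu,
              forall l' : nat, (l' < l)%N ->
                 rk g (x k) (gam_seq g (x k) theta (gamma0 k) l') > nu &
              h k = gam_seq g (x k) theta (gamma0 k) l],
        z k = x k - h k *: g (x k),
        let d := g (x k) - beta *: (g (x k) - g (z k)) in
        let alpha :=
          ((1 - beta) * (1 - L * h k / 4) * dot (x k - z k) (x k - z k)
           + beta * dot (x k - z k) (h k *: g (z k)))
          / (h k ^+ 2 * dot d d) in
        x k.+1 = x k - (eta * alpha * h k) *: d
      & gamma0 k.+1 = if rk g (x k) (h k) <= mu
                      then proj_int hlo hhi (tau * h k)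
                      else proj_int hlo hhi (h k)].

End Defs.

(** Split [d^k = (1 - beta) h_k grad f(x^k) + beta h_k grad f(z^k)] and bound
    the two pieces separately.  Co-coercivity of the gradient of an L-smooth
    convex function, taken against a minimizer, gives
    [<x - x*, grad f(x)> >= |grad f(x)|^2 / L], and [1/L >= h (1 - L h / 4)]
    by AM-GM, which yields the [(1 - beta)] term since [x^k - z^k = h_k grad f(x^k)].
    Monotonicity of the gradient gives [<z^k - x*, grad f(z^k)> >= 0], which
    turns [<x^k - x*, grad f(z^k)>] into [<x^k - z^k, grad f(z^k)>].  Finally the
    acceptance test [r_k(h_k) <= nu] of the backtracking says
    [|grad f(z^k) - grad f(x^k)| <= nu |grad f(x^k)|], and Cauchy-Schwarz then
    gives [<x^k - z^k, h_k grad f(z^k)> >= (1 - nu) |x^k - z^k|^2]. *)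
From HB Require Import structures.
From mathcomp Require Import all_boot all_order all_algebra.
From mathcomp Require Import all_classical all_reals all_analysis.
From mathcomp Require Import ring lra.
Set Implicit Arguments. Unset Strict Implicit. Unset Printing Implicit Defensive.
Import Order.TTheory GRing.Theory Num.Theory.
Import numFieldNormedType.Exports.
Local Open Scope classical_set_scope.
Local Open Scope ring_scope.

Section EuclideanGeometry.
Variables (R : realType) (n : nat).
Implicit Types (u v w : 'rV[R]_n).

Lemma dotC u v : dot u v = dot v u.
Proof. by apply: eq_bigr => i _; rewrite mulrC. Qed.

Lemma dotDl u v w : dot (u + v) w = dot u w + dot v w.
Proof. by rewrite /dot -big_split; apply: eq_bigr => i _; rewrite mxE mulrDl. Qed.

Lemma dotZl (a : R) u v : dot (a *: u) v = a * dot u v.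
Proof. by rewrite /dot mulr_sumr; apply: eq_bigr => i _; rewrite mxE mulrA. Qed.

Lemma dotNl u v : dot (- u) v = - dot u v.
Proof. by rewrite -scaleN1r dotZl mulN1r. Qed.

Lemma dotBl u v w : dot (u - v) w = dot u w - dot v w.
Proof. by rewrite dotDl dotNl. Qed.

Lemma dotDr u v w : dot u (v + w) = dot u v + dot u w.
Proof. by rewrite dotC dotDl !(dotC u). Qed.

Lemma dotZr (a : R) u v : dot u (a *: v) = a * dot u v.
Proof. by rewrite dotC dotZl dotC. Qed.

Lemma dotNr u v : dot u (- v) = - dot u v.
Proof. by rewrite dotC dotNl dotC. Qed.

Lemma dotBr u v w : dot u (v - w) = dot u v - dot u w.
Proof. by rewrite dotDr dotNr. Qed.

Lemma dot0l v : dot 0 v = 0.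
Proof. by rewrite -(scale0r 0) dotZl mul0r. Qed.

Lemma dot_ge0 u : 0 <= dot u u.
Proof. by apply: sumr_ge0 => i _; rewrite -expr2 sqr_ge0. Qed.

Lemma dot_eq0 u : (dot u u == 0) = (u == 0).
Proof.
apply/idP/eqP => [|->]; last by rewrite dot0l.
rewrite psumr_eq0 => [/allP u0|i _]; last by rewrite -expr2 sqr_ge0.
apply/rowP => i; have := u0 i (mem_index_enum i).
by rewrite /= mulf_eq0 orbb mxE => /eqP.
Qed.

Lemma enorm_ge0 u : 0 <= enorm u.
Proof. exact: sqrtr_ge0. Qed.

Lemma enorm_sqr u : enorm u ^+ 2 = dot u u.
Proof. by rewrite sqr_sqrtr // dot_ge0. Qed.

Lemma enorm_gt0 u : (0 < enorm u) = (u != 0).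
Proof. by rewrite sqrtr_gt0 lt_def dot_ge0 andbT dot_eq0. Qed.

Lemma enormZ (a : R) u : enorm (a *: u) = `|a| * enorm u.
Proof. by rewrite /enorm dotZl dotZr mulrA -expr2 sqrtrM ?sqr_ge0 // sqrtr_sqr. Qed.

Lemma enormN u : enorm (- u) = enorm u.
Proof. by rewrite -scaleN1r enormZ normrN normr1 mul1r. Qed.

Lemma dot_le_mul_enorm u v : dot u v <= enorm u * enorm v.
Proof.
have [->|u0] := eqVneq u 0; first by rewrite dot0l mulr_ge0 ?enorm_ge0.
have [->|v0] := eqVneq v 0; first by rewrite dotC dot0l mulr_ge0 ?enorm_ge0.
have a0 : 0 < enorm u by rewrite enorm_gt0.
have b0 : 0 < enorm v by rewrite enorm_gt0.
have := dot_ge0 (enorm v *: u - enorm u *: v).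
rewrite !(dotBl, dotBr, dotZl, dotZr) (dotC v u) -!enorm_sqr.
have ab0 : 0 < enorm u * enorm v by rewrite mulr_gt0.
nra.
Qed.

Lemma dot_ge_of_enorm_subr_le (nu : R) u w :
  enorm (w - u) <= nu * enorm u -> (1 - nu) * dot u u <= dot u w.
Proof.
move=> wu; have cs := dot_le_mul_enorm (- u) (w - u).
rewrite dotNl enormN in cs.
have : enorm u * enorm (w - u) <= enorm u * (nu * enorm u).
  by rewrite ler_wpM2l ?enorm_ge0.
have : dot u w = dot u u + dot u (w - u) by rewrite dotBr addrC subrK.
rewrite -enorm_sqr; nra.
Qed.

End EuclideanGeometry.

Lemma mul_subr_quarter_le_inv (R : realFieldType) (L h : R) :
  0 < L -> h * (1 - L * h / 4) <= L^-1.
Proof.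
move=> L0; rewrite -subr_ge0.
have -> : L^-1 - h * (1 - L * h / 4) = L * (L^-1 - h / 2) ^+ 2.
  by field; rewrite gt_eqF.
by rewrite mulr_ge0 ?sqr_ge0 ?ltW.
Qed.

Lemma convex_combination_gt0 (R : numDomainType) (t a b : R) :
  0 <= t <= 1 -> 0 < a -> 0 < b -> 0 < (1 - t) * a + t * b.
Proof.
move=> /andP [t0 t1] a0 b0; have [->|t_neq0] := eqVneq t 0.
  by rewrite subr0 mul1r mul0r addr0.
by rewrite ltr_wpDl ?mulr_ge0 ?subr_ge0 ?(ltW a0) // mulr_gt0 // lt_def t_neq0.
Qed.

Section SmoothConvex.
Variables (R : realType) (n : nat) (f : 'rV[R]_n -> R) (g : 'rV[R]_n -> 'rV[R]_n).
Hypothesis grad_fg : is_gradient f g.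

Lemma is_derive_line (y v : 'rV[R]_n) (t : R) :
  is_derive t 1 (fun s : R => f (s *: v + y)) (dot (g (t *: v + y)) v).
Proof.
have [df dD] := grad_fg (t *: v + y).
have der : derivable f (t *: v + y) v := diff_derivable (v := v) df.
have E : (fun h : R => h^-1 *: (((fun s : R => f (s *: v + y)) \o shift t) (h *: 1)
            - f (t *: v + y))) =
         (fun h : R => h^-1 *: ((f \o shift (t *: v + y)) (h *: v) - f (t *: v + y))).
  apply/funext => h /=; congr (_ *: (f _ - _)).
  by rewrite [h *: 1]mulr1 scalerDl addrA.
apply: DeriveDef; first by rewrite /derivable E.
by rewrite /derive E; exact: dD.
Qed.

Lemma convex_gradient_le (a b : 'rV[R]_n) :
  convex_fun f -> f a + dot (g a) (b - a) <= f b.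
Proof.
move=> cvx_f; have [df dD] := grad_fg a.
have der : derivable f a (b - a) := diff_derivable (v := b - a) df.
rewrite -(dD (b - a)) addrC -lerBrDr; move: der; rewrite /derivable /derive.
set q := (fun h : R => _) => der.
have qr : q @ 0^'+ --> lim (q @ 0^').
  move=> A /der /nbhs_ballP [e e0 eA].
  by exists e => //= y ye /gt_eqF/negbT/eA; exact.
apply: (cvgr_to_le qr); near=> h.
have h0 : 0 < h by near: h; exact: nbhs_right_gt.
have h1 : h <= 1 by near: h; apply: nbhs_right_le; exact: ltr01.
have := cvx_f b a h; rewrite h1 (ltW h0) => /(_ isT).
have -> : h *: b + (1 - h) *: a = h *: (b - a) + a.
  by rewrite scalerBr scalerBl scale1r addrA addrAC.
by rewrite /q /= ler_pdivrMl // mulrBr; lra.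
Unshelve. all: by end_near.
Qed.

Variable L : R.
Hypothesis lip_g : lipschitz_grad g L.

Lemma descent_lemma (y v : 'rV[R]_n) :
  f (v + y) <= f y + dot (g y) v + L / 2 * dot v v.
Proof.
set c := dot (g y) v; set k := L / 2 * dot v v.
pose psi := (fun s : R => f (s *: v + y)) - (c \*: id) - (k \*: (id * id)).
have psi_der (t : R) :
    is_derive t (1 : R) psi (dot (g (t *: v + y)) v - c *: 1 - k *: (t *: 1 + t *: 1)).
  by apply: is_deriveB; first apply: is_deriveB; first exact: is_derive_line.
have psi'_le0 (t : R) : 0 <= t ->
    dot (g (t *: v + y)) v - c%:A - k *: (t%:A + t%:A) <= 0.
  move=> t0; have lip := lip_g (t *: v + y) y.
  rewrite addrK enormZ ger0_norm // in lip.
  have cs := dot_le_mul_enorm (g (t *: v + y) - g y) v.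
  rewrite dotBl -/c in cs.
  have : enorm (g (t *: v + y) - g y) * enorm v <= L * (t * enorm v) * enorm v.
    by rewrite ler_wpM2r ?enorm_ge0.
  have := enorm_sqr v; rewrite /k /GRing.scale /= !mulr1 => <-.
  nra.
have : psi 1 <= psi 0.
  apply: (@ler0_derive1_le_cc _ psi 0 1 _ _ _ 1 0); rewrite ?in_itv /= ?ler01 ?lexx //.
  - move=> s; rewrite in_itv /= => /andP [s0 _].
    by rewrite derive1E derive_val psi'_le0 // ltW.
  - by apply: derivable_within_continuous => s _.
rewrite /psi !fctE /= scale1r scale0r add0r /GRing.scale /= !mulr1 !mulr0 !subr0.
lra.
Qed.

Hypotheses (cvx_f : convex_fun f) (L_gt0 : 0 < L).

(* Minimize the descent bound at [b] along [- (g b - g a) / L] and compare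
   with the gradient inequality at [a]. *)
Lemma smooth_convex_lower_bound (a b : 'rV[R]_n) :
  f a + dot (g a) (b - a) + (2 * L)^-1 * dot (g b - g a) (g b - g a) <= f b.
Proof.
set D := g b - g a; set v := - (L^-1) *: D.
have ga_le := convex_gradient_le a (v + b) cvx_f.
have desc := descent_lemma b v.
rewrite -addrA (addrC v) dotDr in ga_le.
rewrite -[g b](subrK (g a)) -/D dotDl in desc.
rewrite /v !(dotZl, dotZr) in ga_le desc.
have -> : (2 * L)^-1 = L^-1 / 2 by rewrite invfM mulrC.
have E : L / 2 * (- L^-1 * (- L^-1 * dot D D)) = L^-1 / 2 * dot D D.
  by field; rewrite gt_eqF.
rewrite E in desc; lra.
Qed.

Lemma gradient_cocoercive (a b : 'rV[R]_n) :
  L^-1 * dot (g b - g a) (g b - g a) <= dot (g b - g a) (b - a).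
Proof.
have ab := smooth_convex_lower_bound a b.
have ba := smooth_convex_lower_bound b a.
rewrite -(opprB (g b)) -(opprB b) dotNl !dotNr opprK in ba.
have E : (2 * L)^-1 = L^-1 / 2 by rewrite invfM mulrC.
rewrite E in ab ba; rewrite [dot _ (b - a)]dotBl; lra.
Qed.

Variable xs : 'rV[R]_n.
Hypothesis g_xs : g xs = 0.

Lemma gradient_cocoercive_minimizer (y : 'rV[R]_n) :
  L^-1 * dot (g y) (g y) <= dot (g y) (y - xs).
Proof. by have := gradient_cocoercive xs y; rewrite g_xs subr0. Qed.

Lemma gradient_monotone_minimizer (y : 'rV[R]_n) : 0 <= dot (g y) (y - xs).
Proof.
apply: le_trans (gradient_cocoercive_minimizer y).
by rewrite mulr_ge0 ?dot_ge0 // invr_ge0 ltW.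
Qed.

Lemma gradient_step_term_ge (h : R) (x : 'rV[R]_n) : 0 <= h ->
  (1 - L * h / 4) * enorm (x - zk g x h) ^+ 2 <= dot (x - xs) (h *: g x).
Proof.
move=> h0; rewrite /zk subKr enorm_sqr !(dotZl, dotZr) (dotC (x - xs)).
apply: le_trans (ler_wpM2l h0 (gradient_cocoercive_minimizer x)).
have := ler_wpM2r (mulr_ge0 h0 (dot_ge0 (g x))) (mul_subr_quarter_le_inv h L_gt0).
set q := dot (g x) (g x).
have -> : (1 - L * h / 4) * (h * (h * q)) = h * (1 - L * h / 4) * (h * q) by ring.
by rewrite [h * (L^-1 * _)]mulrCA.
Qed.

Lemma extragradient_term_ge (h : R) (x : 'rV[R]_n) : 0 <= h ->
  dot (x - zk g x h) (h *: g (zk g x h)) <= dot (x - xs) (h *: g (zk g x h)).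
Proof.
move=> h0; set z := zk g x h.
have -> : x - xs = (x - z) + (z - xs) by rewrite addrA subrK.
rewrite [in X in _ <= X]dotDl lerDl dotZr dotC.
by rewrite mulr_ge0 ?gradient_monotone_minimizer.
Qed.

Lemma direction_inner_product_ge (beta h : R) (x : 'rV[R]_n) :
  0 <= beta <= 1 -> 0 <= h ->
  (1 - beta) * (1 - L * h / 4) * enorm (x - zk g x h) ^+ 2
    + beta * dot (x - zk g x h) (h *: g (zk g x h))
  <= dot (x - xs) (h *: (g x - beta *: (g x - g (zk g x h)))).
Proof.
move=> /andP [b0 b1] h0; set z := zk g x h.
have -> : h *: (g x - beta *: (g x - g z)) = (1 - beta) *: (h *: g x) + beta *: (h *: g z).
  by apply/rowP => i; rewrite !mxE; ring.
rewrite dotDr (dotZr (1 - beta)) (dotZr beta) -mulrA.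
apply: lerD; rewrite ler_wpM2l ?subr_ge0 //.
- exact: gradient_step_term_ge.
- exact: extragradient_term_ge.
Qed.

End SmoothConvex.

Lemma rk_le_enorm_grad_subr (R : realType) (n : nat) (g : 'rV[R]_n -> 'rV[R]_n)
    (x : 'rV[R]_n) (h nu : R) :
  0 < h -> g x != 0 -> rk g x h <= nu ->
  enorm (g (zk g x h) - g x) <= nu * enorm (g x).
Proof.
move=> h0 gx0; have gx_gt0 : 0 < enorm (g x) by rewrite enorm_gt0.
rewrite /rk {2}/zk addrAC subrr add0r enormN enormZ gtr0_norm //.
by rewrite ler_pdivrMr ?mulr_gt0 // mulrCA ler_pM2l.
Qed.

Lemma extragradient_term_lower (R : realType) (n : nat) (g : 'rV[R]_n -> 'rV[R]_n)
    (x : 'rV[R]_n) (h nu : R) :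
  enorm (g (zk g x h) - g x) <= nu * enorm (g x) ->
  (1 - nu) * enorm (x - zk g x h) ^+ 2 <= dot (x - zk g x h) (h *: g (zk g x h)).
Proof.
move=> /dot_ge_of_enorm_subr_le le_nu.
have -> : x - zk g x h = h *: g x by rewrite subKr.
rewrite enorm_sqr !(dotZl, dotZr).
have -> : (1 - nu) * (h * (h * dot (g x) (g x))) = h * h * ((1 - nu) * dot (g x) (g x)).
  by ring.
by rewrite [h * (h * _)]mulrA ler_wpM2l // -expr2 sqr_ge0.
Qed.

Lemma proj_int_bounds (R : realType) (a b t : R) : a <= b ->
  a <= proj_int a b t <= b.
Proof. by move=> ab; rewrite le_max lexx ge_max ab ge_min lexx. Qed.

Lemma gam_seq_bounds (R : realType) (n : nat) (g : 'rV[R]_n -> 'rV[R]_n) x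
    (theta gam0 nu : R) (l : nat) :
  0 < gam0 -> 0 < nu -> 0 < theta -> theta < 1 ->
  (forall l', (l' < l)%N -> nu < rk g x (gam_seq g x theta gam0 l')) ->
  0 < gam_seq g x theta gam0 l <= gam0.
Proof.
move=> gam0_gt0 nu_gt0 th0 th1; elim: l => [|l IH] rk_gt; first by rewrite gam0_gt0 lexx.
have /andP [c0 c_le] := IH (fun l' lt_l' => rk_gt l' (leqW lt_l')).
have rk_gt_nu := rk_gt l (ltnSn l).
rewrite /=; set c := gam_seq g x theta gam0 l in c0 c_le rk_gt_nu *.
set m := Num.min 1 (1 / rk g x c).
have m0 : 0 < m by rewrite lt_min ltr01 divr_gt0 // (lt_trans nu_gt0 rk_gt_nu).
have m1 : m <= 1 by rewrite ge_min lexx.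
rewrite !mulr_gt0 //=; apply: le_trans c_le; rewrite -mulrA ger_pMr //.
by rewrite -[1]mulr1 ler_pM // ?ltW.
Qed.

Section Algorithm3.
Variables (R : realType) (n : nat) (g : 'rV[R]_n -> 'rV[R]_n).
Variables (L mu nu hlo hhi beta theta tau eta : R) (x0 : 'rV[R]_n).
Variables (x z : nat -> 'rV[R]_n) (h gamma0 : nat -> R).
Hypothesis alg : alg3 g L mu nu hlo hhi beta theta tau eta x0 x z h gamma0.

Lemma alg3_gamma0_bounds (k : nat) :
  0 < hlo -> hlo <= hhi -> 0 < gamma0 0%N -> gamma0 0%N <= hhi ->
  (forall j, (j <= k)%N -> g (x j) != 0) -> 0 < gamma0 k <= hhi.
Proof.
move=> hlo0 hlo_hhi g00 g0h; case: k => [|k] gx0; first by rewrite g00 g0h.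
have [_ _ _ ->] := alg.2 k (fun j jk => gx0 j (leqW jk)).
have proj_bounds t : 0 < proj_int hlo hhi t <= hhi.
  by case/andP: (proj_int_bounds t hlo_hhi) => lo_le ->; rewrite (lt_le_trans hlo0 lo_le).
by case: ifP.
Qed.

Lemma alg3_step (k : nat) :
  0 < nu -> 0 < theta -> theta < 1 -> 0 < gamma0 k ->
  (forall j, (j <= k)%N -> g (x j) != 0) ->
  [/\ 0 < h k <= gamma0 k, z k = zk g (x k) (h k) & rk g (x k) (h k) <= nu].
Proof.
move=> nu0 th0 th1 g0k gx0.
have [[l [rk_le rk_gt ->]] -> _ _] := alg.2 k gx0.
by split; first exact: gam_seq_bounds g0k nu0 th0 th1 rk_gt.
Qed.

End Algorithm3.

Theorem lemma6 (R : realType) (n : nat) (f : 'rV[R]_n -> R)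
  (g : 'rV[R]_n -> 'rV[R]_n) (L : R)
  (mu nu hlo hhi beta theta tau eta : R) (x0 : 'rV[R]_n)
  (x z : nat -> 'rV[R]_n) (h gamma0 : nat -> R) :
  convex_fun f -> is_gradient f g -> 0 < L -> lipschitz_grad g L ->
  (exists xs : 'rV[R]_n, g xs = 0) ->
  0 < mu -> mu < nu -> nu < 1 ->
  0 < hlo -> hlo < 1 -> 1 <= gamma0 0%N -> gamma0 0%N <= hhi -> hhi < 4 / L ->
  0 <= beta -> beta <= 1 -> 0 < theta -> theta < 1 -> 1 < tau ->
  0 < eta -> eta < 2 ->
  alg3 g L mu nu hlo hhi beta theta tau eta x0 x z h gamma0 ->
  forall (xs : 'rV[R]_n), g xs = 0 ->
  forall k : nat, (forall j : nat, (j <= k)%N -> g (x j) != 0) ->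
    let d := h k *: (g (x k) - beta *: (g (x k) - g (z k))) in
    let kappa3 := (1 - beta) * (1 - L * h k / 4) + beta * (1 - nu) in
    [/\ dot (x k - xs) d >=
          (1 - beta) * (1 - L * h k / 4) * enorm (x k - z k) ^+ 2
          + beta * dot (x k - z k) (h k *: g (z k)),
        (1 - beta) * (1 - L * h k / 4) * enorm (x k - z k) ^+ 2
          + beta * dot (x k - z k) (h k *: g (z k))
          >= kappa3 * enorm (x k - z k) ^+ 2
      & 0 < kappa3].
Proof.
move=> cvx_f grad_fg L0 lip_g _ mu0 mu_nu nu1 hlo0 hlo1 g00 g0h hhiL b0 b1 th0 th1
  _ _ _ alg xs g_xs k gx0 d kappa3.
have nu0 : 0 < nu by apply: lt_trans mu_nu.
have hlo_hhi : hlo <= hhi by rewrite (le_trans _ g0h) // (le_trans _ g00) // ltW.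
have /andP [g0k_gt0 g0k_le] := alg3_gamma0_bounds alg hlo0 hlo_hhi
  (lt_le_trans ltr01 g00) g0h gx0.
have [/andP [hk0 hk_le] zkE rk_le] := alg3_step alg nu0 th0 th1 g0k_gt0 gx0.
have Lh4 : L * h k < 4.
  by rewrite mulrC -ltr_pdivlMr // (le_lt_trans _ hhiL) // (le_trans hk_le).
have ext := extragradient_term_lower
  (rk_le_enorm_grad_subr hk0 (gx0 k (leqnn k)) rk_le).
rewrite /d /kappa3 zkE; split.
- apply: (direction_inner_product_ge grad_fg lip_g cvx_f L0 g_xs).
  + by rewrite b0 b1.
  + exact: ltW.
- by rewrite mulrDl lerD2l -mulrA ler_wpM2l.
- by apply: convex_combination_gt0; rewrite ?b0 ?b1 ?subr_gt0 //; lra.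
Qed.
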